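(* Let $h_1,h_2$ be flow graphs over a flow monoid with $X=h_1.X=h_2.X$ and $h_1.\mathit{in}=h_2.\mathit{in}$. Let $F$ satisfy $\mathrm{Out}(h_1,h_2)\subseteq F\subseteq X$ and $\mathrm{TF}_{h_1,h_2}(F)=\emptyset$. Then $(h_1|_F).\mathit{in}=(h_2|_F).\mathit{in}$.
   Context: A flow monoid is a commutative monoid $(\mathbb{M},+,0)$ such that $n\le m :\iff \exists o.\ m=n+o$ is a partial order in which every ascending chain $K$ has a least upper bound $\bigsqcup K$, and $n+\bigsqcup K=\bigsqcup(n+K)$. $\mathcal{C}(\mathbb{M}\to\mathbb{M})$ is the set of functions commuting with least upper bounds of ascending chains. Infinite sums denote least upper bounds of finite partial sums. A flow graph is $h=(X,E,\mathit{in})$ with $X\subseteq\mathbb{N}$ finite, $E:X\times\mathbb{N}\to\mathcal{C}(\mathbb{M}\to\mathbb{M})$, $\mathit{in}:(\mathbb{N}\setminus X)\times X\to\mathbb{M}$; $\mathit{in}_x=\sum_{y\in\mathbb{N}\setminus X}\mathit{in}(y,x)$; the flow $h.\mathit{flow}$ is the least $\mathit{flow}:X\to\mathbb{M}$ with $\mathit{flow}(x)=\mathit{in}_x+\sum_{y\in X}E(y,x)(\mathit{flow}(y))$; the outflow is $h.\mathit{out}(x,y)=E(x,y)(h.\mathit{flow}(x))$ for $x\in X$, $y\notin X$. Transfer function: $\mathsf{tf}(h)(\mathit{in}')$ is the outflow of $(X,E,\mathit{in}')$ for any inflow $\mathit{in}'$. Restriction: for $Y\subseteq\mathbb{N}$,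 $h|_Y=(X\cap Y,\ E|_{(X\cap Y)\times\mathbb{N}},\ \mathit{in}')$ with $\mathit{in}'(z,y)=\mathit{in}(z,y)$ for $z\notin X$, $y\in X\cap Y$, and $\mathit{in}'(x,y)=E(x,y)(h.\mathit{flow}(x))$ for $x\in X\setminus Y$, $y\in X\cap Y$. For $h_1,h_2$ over the same node set $X$: $\mathrm{Out}(h_1,h_2)=\{x\in X\mid \exists z\in\mathbb{N}.\ h_1.E(x,z)\neq h_2.E(x,z)\}$, and for $Z\subseteq X$ the transfer failure is $\mathrm{TF}_{h_1,h_2}(Z)=\{x\in\mathbb{N}\setminus Z\mid \exists\,\mathit{in}\le (h_1|_Z).\mathit{in}\ \exists z\in Z:\ \mathsf{tf}(h_1|_Z)(\mathit{in})(z,x)\neq\mathsf{tf}(h_2|_Z)(\mathit{in})(z,x)\}$ (inflows compared pointwise). *)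

From HB Require Import structures.
From mathcomp Require Import all_boot finmap.
From Stdlib Require Import ClassicalEpsilon.
Set Implicit Arguments. Unset Strict Implicit. Unset Printing Implicit Defensive.
Local Open Scope fset_scope.

Definition ale {T : Type} (add : T -> T -> T) (n m : T) : Prop :=
  exists o, m = add n o.

Definition is_lub_wrt {T : Type} (add : T -> T -> T) (K : T -> Prop) (l : T) : Prop :=
  (forall k, K k -> ale add k l) /\
  (forall u, (forall k, K k -> ale add k u) -> ale add l u).

Definition chain_wrt {T : Type} (add : T -> T -> T) (K : T -> Prop) : Prop :=
  (exists k, K k) /\ (forall a b, K a -> K b -> ale add a b \/ ale add b a).

Definition img {T : Type} (f : T -> T) (K : T -> Prop) : T -> Prop :=
  fun y => exists k, K k /\ y = f k.

Record flowMonoid := FlowMonoid {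
  fm_car :> Type;
  fm_add : fm_car -> fm_car -> fm_car;
  fm_zero : fm_car;
  fm_addA : forall a b c, fm_add a (fm_add b c) = fm_add (fm_add a b) c;
  fm_addC : forall a b, fm_add a b = fm_add b a;
  fm_add0 : forall a, fm_add a fm_zero = a;
  (* reflexivity and transitivity of ale follow from the monoid laws *)
  fm_antisym : forall n m, ale fm_add n m -> ale fm_add m n -> n = m;
  fm_chain_lub : forall K, chain_wrt fm_add K -> exists l, is_lub_wrt fm_add K l;
  fm_add_cont : forall (K : fm_car -> Prop) n l, chain_wrt fm_add K ->
      is_lub_wrt fm_add K l -> is_lub_wrt fm_add (img (fm_add n) K) (fm_add n l)
}.

Section FlowDefs.
Variable M : flowMonoid.

Definition mle (n m : M) := ale (@fm_add M) n m.
Definition is_lub (K : M -> Prop) (l : M) := is_lub_wrt (@fm_add M) K l.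
Definition chain (K : M -> Prop) := chain_wrt (@fm_add M) K.

(* the least upper bound (meaningful when it exists, e.g. for chains) *)
Definition sup (K : M -> Prop) : M :=
  epsilon (inhabits (@fm_zero M)) (is_lub K).

Definition continuousM (f : M -> M) : Prop :=
  forall K l, chain K -> is_lub K l -> is_lub (img f K) (f l).

(* E is meaningful on X x N, in on (N \ X) x X; other values are irrelevant *)
Record flowGraph := FlowGraph {
  fg_X : {fset nat};
  fg_E : nat -> nat -> M -> M;
  fg_Econt : forall x y, x \in fg_X -> continuousM (fg_E x y);
  fg_in : nat -> nat -> M
}.

Definition msum (s : seq nat) (F : nat -> M) : M :=
  \big[@fm_add M/@fm_zero M]_(y <- s) F y.

(* in_x = sum_{y in N \ X} in(y,x) : lub of the finite partial sums *)
Definition partial_inflow (h : flowGraph) (x : nat) (n : nat) : M :=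
  msum [seq y <- iota 0 n | y \notin fg_X h] (fun y => fg_in h y x).

Definition inflow_at (h : flowGraph) (x : nat) : M :=
  sup (fun m => exists n, m = partial_inflow h x n).

Definition flow_solution (h : flowGraph) (f : nat -> M) : Prop :=
  forall x, x \in fg_X h ->
    f x = fm_add (inflow_at h x)
                 (msum (enum_fset (fg_X h)) (fun y => fg_E h y x (f y))).

Definition is_flow (h : flowGraph) (f : nat -> M) : Prop :=
  (forall x, x \notin fg_X h -> f x = @fm_zero M) /\
  flow_solution h f /\
  (forall g, flow_solution h g -> forall x, x \in fg_X h -> mle (f x) (g x)).

Definition flow (h : flowGraph) : nat -> M :=
  epsilon (inhabits (fun _ : nat => @fm_zero M)) (is_flow h).

(* outflow, meaningful for x in X, y not in X *)
Definition outflow (h : flowGraph) (x y : nat) : M := fg_E h x y (flow h x).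

Definition with_inflow (h : flowGraph) (inf : nat -> nat -> M) : flowGraph :=
  FlowGraph (@fg_Econt h) inf.

Definition tf (h : flowGraph) (inf : nat -> nat -> M) : nat -> nat -> M :=
  outflow (with_inflow h inf).

Lemma restr_cont (h : flowGraph) (Y : pred nat) :
  forall x y, x \in [fset z in fg_X h | Y z] -> continuousM (fg_E h x y).
Proof.
move=> x y; rewrite !inE => /andP [hx _]; exact: fg_Econt.
Qed.

Definition restrict (h : flowGraph) (Y : pred nat) : flowGraph :=
  @FlowGraph [fset z in fg_X h | Y z] (fg_E h) (@restr_cont h Y)
    (fun z y => if z \in fg_X h then fg_E h z y (flow h z) else fg_in h z y).

Definition Out (h1 h2 : flowGraph) (x : nat) : Prop :=
  x \in fg_X h1 /\ exists z, fg_E h1 x z <> fg_E h2 x z.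

Definition TF (h1 h2 : flowGraph) (Z : pred nat) (x : nat) : Prop :=
  ~~ Z x /\
  exists inf : nat -> nat -> M,
    (forall y z, y \notin fg_X (restrict h1 Z) -> z \in fg_X (restrict h1 Z) ->
        mle (inf y z) (fg_in (restrict h1 Z) y z)) /\
    exists z, Z z /\ tf (restrict h1 Z) inf z x <> tf (restrict h2 Z) inf z x.

End FlowDefs.

From mathcomp Require Import all_boot finmap.
From HB Require Import structures.
From Stdlib Require Import Classical ClassicalEpsilon.
Set Implicit Arguments. Unset Strict Implicit. Unset Printing Implicit Defensive.

(* The inflow of h|_F from a node x outside F is E(x,-)(h.flow x), and E
   agrees on such x, so it suffices to show h1.flow = h2.flow outside F.
   The proof has three layers:
   - order theory of the flow monoid: ascending sequences have lubs, and
     lubs commute with finite sums and continuous functions; hence the flow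
     is the Kleene limit of Phi, and is below every prefixpoint of Phi;
   - restriction: h|_F has the same flow as h on F, and its inflow is the
     inflow of h plus the flow sent from nodes outside F;
   - comparison ([flow_le_off]): if the transfer function of ha|_F, fed the
     inflow of hb|_F, behaves like that of hb|_F, then splicing the flow of
     the fed graph on F with hb.flow off F is a prefixpoint for ha, so
     ha.flow <= hb.flow off F.
   Applied with h1|_F's own inflow this gives h2.flow <= h1.flow off F;
   hence ([restrict_inflow_le]) the inflow of h2|_F is below that of h1|_F,
   so the absence of transfer failures applies to it as well and gives
   h1.flow <= h2.flow off F.  Antisymmetry concludes. *)

HB.instance Definition _ (M : flowMonoid) :=
  Monoid.isComLaw.Build (fm_car M) (@fm_zero M) (@fm_add M) (@fm_addA M)
    (@fm_addC M) (fun a => etrans (fm_addC _ _) (fm_add0 a)).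

Section FlowTheory.
Variable M : flowMonoid.
Local Notation add := (@fm_add M).
Local Notation z0 := (@fm_zero M).

Lemma add0l (a : M) : add z0 a = a.
Proof. by rewrite fm_addC fm_add0. Qed.

Lemma mle_refl (a : M) : mle a a.
Proof. by exists z0; rewrite fm_add0. Qed.

Lemma mle_trans (a b c : M) : mle a b -> mle b c -> mle a c.
Proof. by move=> [o ->] [p ->]; exists (add o p); rewrite fm_addA. Qed.

Lemma mle0 (a : M) : mle z0 a.
Proof. by exists a; rewrite add0l. Qed.

Lemma mle_addr (a b : M) : mle a (add a b).
Proof. by exists b. Qed.

Lemma mle_add (a b c d : M) : mle a b -> mle c d -> mle (add a c) (add b d).
Proof.
move=> [o ->] [p ->]; exists (add o p).
rewrite -!fm_addA; congr (add a _).
by rewrite [add o _]fm_addC -!fm_addA [add p o]fm_addC.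
Qed.

Lemma lub_unique K (l l' : M) : is_lub K l -> is_lub K l' -> l = l'.
Proof. by move=> [ub least] [ub' least']; apply: fm_antisym; [apply: least|apply: least']. Qed.

Lemma lub_ext (K K' : M -> Prop) l :
  (forall m, K m <-> K' m) -> is_lub K l -> is_lub K' l.
Proof.
move=> eK [ub least]; split; first by move=> k /eK; apply: ub.
by move=> u hu; apply: least => k /eK; apply: hu.
Qed.

Lemma sup_spec K : (exists l : M, is_lub K l) -> is_lub K (sup K).
Proof. by move=> [l hl]; apply: epsilon_spec; exists l. Qed.

(* Continuous functions are monotone: apply continuity to the chain {a, b}. *)
Lemma cont_mono (f : M -> M) a b : continuousM f -> mle a b -> mle (f a) (f b).
Proof.
move=> hf hab.
have hc : chain (fun m => m = a \/ m = b).
  split; first by exists a; left.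
  by move=> x y [->|->] [->|->]; (try by left; apply: mle_refl); [left|right].
have hl : is_lub (fun m => m = a \/ m = b) b.
  split; first by move=> k [->|->] //; apply: mle_refl.
  by move=> u hu; apply: hu; right.
by have [ub _] := hf _ _ hc hl; apply: ub; exists a; split => //; left.
Qed.

Definition rng (s : nat -> M) : M -> Prop := fun m => exists n, m = s n.
Definition mono (s : nat -> M) : Prop := forall n, mle (s n) (s n.+1).

Lemma mono_le s n m : mono s -> n <= m -> mle (s n) (s m).
Proof.
move=> hs; elim: m => [|m IH]; first by rewrite leqn0 => /eqP ->; apply: mle_refl.
rewrite leq_eqVlt => /orP [/eqP ->|]; first exact: mle_refl.
by rewrite ltnS => /IH h; apply: mle_trans h (hs m).
Qed.

Lemma chain_rng s : mono s -> chain (rng s).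
Proof.
move=> hs; split; first by exists (s 0), 0.
move=> _ _ [n ->] [m ->]; case: (leqP n m) => h.
  by left; apply: mono_le.
by right; apply: mono_le => //; apply: ltnW.
Qed.

Lemma lub_ex s : mono s -> exists l, is_lub (rng s) l.
Proof. by move=> /chain_rng /fm_chain_lub. Qed.

Lemma lub_shift s l N :
  mono s -> is_lub (rng s) l -> is_lub (rng (fun n => s (n + N))) l.
Proof.
move=> hs [ub least]; split; first by move=> k [n ->]; apply: ub; exists (n + N).
move=> u hu; apply: least => k [n ->]; apply: mle_trans (hu (s (n + N)) _).
  by apply: mono_le => //; rewrite leq_addr.
by exists n.
Qed.

Lemma lub_cont (f : M -> M) s l : continuousM f -> mono s -> is_lub (rng s) l ->
  mono (fun n => f (s n)) /\ is_lub (rng (fun n => f (s n))) (f l).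
Proof.
move=> hf hs hl; split; first by move=> n; apply: cont_mono.
apply: lub_ext (hf _ _ (chain_rng hs) hl) => m; split.
  by move=> [k [[n ->] ->]]; exists n.
by move=> [n ->]; exists (s n); split => //; exists n.
Qed.

Lemma lub_addc s l c : mono s -> is_lub (rng s) l ->
  is_lub (rng (fun n => add c (s n))) (add c l).
Proof.
move=> hs hl; apply: lub_ext (fm_add_cont c (chain_rng hs) hl) => m; split.
  by move=> [k [[n ->] ->]]; exists n.
by move=> [n ->]; exists (s n); split => //; exists n.
Qed.

(* Addition is jointly continuous on ascending sequences (diagonal argument). *)
Lemma lub_add2 a b A B : mono a -> mono b -> is_lub (rng a) A -> is_lub (rng b) B ->
  is_lub (rng (fun n => add (a n) (b n))) (add A B).
Proof.
move=> ha hb hA hB; split.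
  by move=> k [n ->]; apply: mle_add; [apply: hA.1|apply: hB.1]; exists n.
move=> u hu.
have bound_aB : forall m, mle (add (a m) B) u.
  move=> m; apply: (lub_addc (a m) hb hB).2 => k [n ->].
  apply: mle_trans (hu (add (a (maxn m n)) (b (maxn m n))) _); last by exists (maxn m n).
  by apply: mle_add; apply: mono_le => //; rewrite ?leq_maxl ?leq_maxr.
have := lub_addc B ha hA; rewrite fm_addC => hAB; apply: hAB.2 => k [m ->].
by rewrite fm_addC; apply: bound_aB.
Qed.

Lemma msum_mono s (f g : nat -> M) :
  (forall y, y \in s -> mle (f y) (g y)) -> mle (msum s f) (msum s g).
Proof.
move=> hfg; rewrite /msum big_seq_cond [X in mle _ X]big_seq_cond.
apply: (big_ind2 (fun a b => mle a b)) => [|x1 x2 y1 y2|y /andP [hy _]].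
- exact: mle_refl.
- exact: mle_add.
- exact: hfg.
Qed.

Lemma lub_msum (ys : seq nat) (s : nat -> nat -> M) (l : nat -> M) :
  (forall y, y \in ys -> mono (s y)) ->
  (forall y, y \in ys -> is_lub (rng (s y)) (l y)) ->
  mono (fun n => msum ys (fun y => s y n)) /\
  is_lub (rng (fun n => msum ys (fun y => s y n))) (msum ys l).
Proof.
rewrite /msum; elim: ys => [|y ys IH] hm hl.
  split; first by move=> n; rewrite !big_nil; apply: mle_refl.
  rewrite big_nil; split; first by move=> k [n ->]; rewrite big_nil; apply: mle_refl.
  by move=> u hu; apply: hu; exists 0; rewrite big_nil.
have hy : y \in y :: ys by rewrite inE eqxx.
have in_tail x : x \in ys -> x \in y :: ys by rewrite inE => ->; rewrite orbT.
have [hm' hl'] := IH (fun x hx => hm x (in_tail x hx)) (fun x hx => hl x (in_tail x hx)).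
split; first by move=> n; rewrite !big_cons; apply: mle_add; [exact: hm|exact: hm'].
rewrite big_cons; apply: lub_ext (lub_add2 (hm y hy) hm' (hl y hy) hl') => m.
by split; move=> [n ->]; exists n; rewrite big_cons.
Qed.

Definition Phi (h : flowGraph M) (g : nat -> M) (x : nat) : M :=
  add (inflow_at h x) (msum (enum_fset (fg_X h)) (fun y => fg_E h y x (g y))).

Definition prefixp (h : flowGraph M) (g : nat -> M) : Prop :=
  forall x, x \in fg_X h -> mle (Phi h g x) (g x).

Lemma Phi_mono h (f g : nat -> M) x :
  (forall y, y \in fg_X h -> mle (f y) (g y)) -> mle (Phi h f x) (Phi h g x).
Proof.
move=> hfg; apply: mle_add; first exact: mle_refl.
by apply: msum_mono => y hy; apply: cont_mono; [exact: fg_Econt|exact: hfg].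
Qed.

Fixpoint kleene_iter (h : flowGraph M) (n : nat) : nat -> M :=
  if n is n'.+1 then fun x => if x \in fg_X h then Phi h (kleene_iter h n') x else z0
  else fun _ => z0.

Lemma kleene_iter_mono h x : mono (fun n => kleene_iter h n x).
Proof.
move=> n; elim: n x => [|n IH] x; first exact: mle0.
by rewrite /=; case: ifP => _; [apply: Phi_mono => y _; apply: IH|apply: mle_refl].
Qed.

Lemma kleene_iter_le h g : prefixp h g ->
  forall n x, x \in fg_X h -> mle (kleene_iter h n x) (g x).
Proof.
move=> hg; elim=> [|n IH] x hx; first exact: mle0.
by rewrite /= hx; apply: mle_trans (hg x hx); apply: Phi_mono.
Qed.

Definition kleene (h : flowGraph M) (x : nat) : M :=
  if x \in fg_X h then sup (rng (fun n => kleene_iter h n x)) else z0.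

Lemma kleene_lub h x : x \in fg_X h ->
  is_lub (rng (fun n => kleene_iter h n x)) (kleene h x).
Proof. by move=> hx; rewrite /kleene hx; apply/sup_spec/lub_ex/kleene_iter_mono. Qed.

Lemma kleene_below h g : prefixp h g ->
  forall x, x \in fg_X h -> mle (kleene h x) (g x).
Proof. by move=> hg x hx; apply: (kleene_lub hx).2 => _ [n ->]; apply: kleene_iter_le. Qed.

(* Kleene's fixpoint theorem: Phi commutes with the lub of its iterates. *)
Lemma kleene_solution h : flow_solution h (kleene h).
Proof.
move=> x hx; rewrite -/(Phi h (kleene h) x).
pose Es y n := fg_E h y x (kleene_iter h n y).
have hEs y (hy : y \in fg_X h) :=
  lub_cont (fg_Econt x hy) (kleene_iter_mono h y) (kleene_lub hy).
have [hmono hsum] := @lub_msum (enum_fset (fg_X h)) Es (fun y => fg_E h y x (kleene h y))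
  (fun y hy => (hEs y hy).1) (fun y hy => (hEs y hy).2).
apply: (lub_unique (lub_shift 1 (kleene_iter_mono h x) (kleene_lub hx))).
apply: lub_ext (lub_addc (inflow_at h x) hmono hsum) => m.
by split; move=> [n ->]; exists n; rewrite addn1 /= hx.
Qed.

Lemma kleene_is_flow h : is_flow h (kleene h).
Proof.
split; first by move=> x hx; rewrite /kleene (negbTE hx).
split; first exact: kleene_solution.
by move=> g hg; apply: kleene_below => x hx; rewrite /Phi -(hg x hx); apply: mle_refl.
Qed.

Lemma flow_is_flow (h : flowGraph M) : is_flow h (flow h).
Proof. by rewrite /flow; apply: epsilon_spec; exists (kleene h); apply: kleene_is_flow. Qed.

Lemma flow_solves (h : flowGraph M) : flow_solution h (flow h).
Proof. by have [_ []] := flow_is_flow h. Qed.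

Lemma flow_below (h : flowGraph M) g : prefixp h g ->
  forall x, x \in fg_X h -> mle (flow h x) (g x).
Proof.
move=> hg x hx; have [_ [_ least]] := flow_is_flow h.
exact: mle_trans (least _ (@kleene_solution h) x hx) (kleene_below hg hx).
Qed.

Lemma msum_eq_in s (f g : nat -> M) :
  (forall y, y \in s -> f y = g y) -> msum s f = msum s g.
Proof. by move=> hfg; rewrite /msum big_seq [RHS]big_seq; apply: eq_bigr. Qed.

Lemma big_eq_in s (P : pred nat) (f g : nat -> M) :
  (forall y, y \in s -> P y -> f y = g y) ->
  \big[add/z0]_(y <- s | P y) f y = \big[add/z0]_(y <- s | P y) g y.
Proof.
move=> hfg; rewrite big_seq_cond [RHS]big_seq_cond.
by apply: eq_bigr => y /andP []; apply: hfg.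
Qed.

Lemma split_sum (X : {fset nat}) (F : pred nat) (f : nat -> M) :
  msum (enum_fset X) f =
  add (\big[add/z0]_(y <- enum_fset X | ~~ F y) f y) (msum (enum_fset [fset z in X | F z]%fset) f).
Proof.
rewrite /msum (bigID F) /= fm_addC; congr (add _ _).
rewrite -big_filter; apply: perm_big; apply: uniq_perm.
- by rewrite filter_uniq // fset_uniq.
- exact: fset_uniq.
by move=> y; rewrite mem_filter !inE andbC.
Qed.

Lemma Phi_split h (F : pred nat) g x :
  Phi h g x = add (inflow_at h x)
    (add (\big[add/z0]_(y <- enum_fset (fg_X h) | ~~ F y) fg_E h y x (g y))
         (msum (enum_fset [fset z in fg_X h | F z]%fset) (fun y => fg_E h y x (g y)))).
Proof. by rewrite /Phi (split_sum _ F). Qed.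

Lemma mono_partial (P : pred nat) (a : nat -> M) :
  mono (fun n => msum [seq y <- iota 0 n | P y] a).
Proof. by move=> n; rewrite -addn1 iotaD filter_cat /msum big_cat; apply: mle_addr. Qed.

Lemma inflow_lub (h : flowGraph M) x :
  is_lub (rng (partial_inflow h x)) (inflow_at h x).
Proof. exact/sup_spec/lub_ex/mono_partial. Qed.

Lemma inflow_ext (h h' : flowGraph M) x : fg_X h = fg_X h' ->
  (forall y, y \notin fg_X h -> fg_in h y x = fg_in h' y x) ->
  inflow_at h x = inflow_at h' x.
Proof.
move=> hX hin; apply: (lub_unique (inflow_lub h x)); apply: lub_ext (inflow_lub h' x) => m.
suff e n : partial_inflow h x n = partial_inflow h' x n.
  by split; move=> [n ->]; exists n; move: (e n); rewrite /partial_inflow => ->.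
by rewrite /partial_inflow -hX /msum !big_filter; apply: eq_bigr => y; apply: hin.
Qed.

(* A graph k on X restricted to F whose inflow is a outside X and c from X \ F
   has inflow (inflow given by a) + (sum of c over X \ F): the partial sums
   contain the whole finite c-part once n exceeds max X. *)
Lemma inflow_restr (k : flowGraph M) (X : {fset nat}) (F : pred nat) x (a c : nat -> M) A :
  fg_X k = [fset z in X | F z]%fset ->
  (forall z, z \notin X -> fg_in k z x = a z) ->
  (forall z, z \in X -> ~~ F z -> fg_in k z x = c z) ->
  is_lub (rng (fun n => msum [seq y <- iota 0 n | y \notin X] a)) A ->
  inflow_at k x = add A (\big[add/z0]_(y <- enum_fset X | ~~ F y) c y).
Proof.
move=> hX ha hc hA.
pose N := \max_(y <- enum_fset X) y.+1.
pose C := \big[add/z0]_(y <- enum_fset X | ~~ F y) c y.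
have memX y : (y \notin [fset z in X | F z]%fset) = (y \notin X) || (y \in X) && ~~ F y.
  by rewrite !inE; case: (y \in X); case: (F y).
have split_partial n : partial_inflow k x n = add (msum [seq y <- iota 0 n | y \notin X] a)
     (\big[add/z0]_(y <- iota 0 n | (y \in X) && ~~ F y) c y).
  rewrite /partial_inflow hX /msum !big_filter (bigID (fun y => y \in X)) /= fm_addC.
  congr (add _ _); apply: eq_big => y; rewrite memX; case hy: (y \in X);
    rewrite /= ?andbF ?andbT //.
  - by move=> _; apply: ha; rewrite hy.
  - by move=> hnF; apply: hc.
have full_c n : N <= n -> \big[add/z0]_(y <- iota 0 n | (y \in X) && ~~ F y) c y = C.
  move=> hn; rewrite /C -[LHS]big_filter -[RHS]big_filter; apply: perm_big; apply: uniq_perm.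
  - by rewrite filter_uniq // iota_uniq.
  - by rewrite filter_uniq // fset_uniq.
  move=> y; rewrite !mem_filter mem_iota add0n /=.
  case hy: (y \in X); rewrite ?andbF ?andbT //=.
  have hyN : y < N := @leq_bigmax_seq _ _ xpredT (fun y => y.+1) y hy isT.
  by rewrite (leq_trans hyN hn) andbT.
have hk := lub_shift N (mono_partial _ _) (inflow_lub k x).
have hs := lub_addc C (fun n => mono_partial _ _ (n + N)) (lub_shift N (mono_partial _ _) hA).
rewrite fm_addC; apply: (lub_unique hk); apply: lub_ext hs => m.
have e n : partial_inflow k x (n + N) = add C (msum [seq y <- iota 0 (n + N) | y \notin X] a).
  by rewrite split_partial full_c ?leq_addl // fm_addC.
by split; move=> [n ->]; exists n; move: (e n); rewrite /partial_inflow => ->.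
Qed.

Lemma restrict_inflow (h : flowGraph M) (F : pred nat) x :
  inflow_at (restrict h F) x = add (inflow_at h x)
    (\big[add/z0]_(y <- enum_fset (fg_X h) | ~~ F y) fg_E h y x (flow h y)).
Proof.
apply: (@inflow_restr _ (fg_X h) F x (fun z => fg_in h z x)) => //.
- by move=> z hz; rewrite /= (negbTE hz).
- by move=> z hz _; rewrite /= hz.
- exact: inflow_lub.
Qed.

(* Restriction preserves the flow on F: h.flow is a solution for h|_F, and
   h|_F.flow spliced with h.flow off F is a prefixpoint for h. *)
Lemma restrict_flow (h : flowGraph M) (F : pred nat) y : y \in fg_X h -> F y ->
  flow (restrict h F) y = flow h y.
Proof.
set h' := restrict h F.
have memF z : (z \in fg_X h') = (z \in fg_X h) && F z by rewrite !inE.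
have le_restr z : z \in fg_X h' -> mle (flow h' z) (flow h z).
  apply: flow_below => x; rewrite memF => /andP [hx _].
  rewrite [X in mle _ X](flow_solves hx) -/(Phi h (flow h) x) (Phi_split h F).
  by rewrite /Phi restrict_inflow fm_addA; apply: mle_refl.
pose f z := if F z then flow h' z else flow h z.
have pre : prefixp h f.
  move=> x hx; case hFx: (F x).
    have -> : Phi h f x = Phi h' (flow h') x.
      rewrite (Phi_split _ F) /Phi restrict_inflow -fm_addA; congr (add _ (add _ _)).
        by apply: big_eq_in => z _ hnF; rewrite /f (negbTE hnF).
      by apply: msum_eq_in => z; rewrite !inE /f => /andP [_ ->].
    rewrite /f hFx [X in mle _ X](@flow_solves h' x) ?memF ?hx ?hFx //.
    exact: mle_refl.
  apply: mle_trans (@Phi_mono h f (flow h) x _) _.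
    move=> z hz; rewrite /f; case: ifP => hFz; last exact: mle_refl.
    by apply: le_restr; rewrite memF hz hFz.
  by rewrite /f hFx [X in mle _ X](flow_solves hx); apply: mle_refl.
move=> hy hFy; apply: fm_antisym; first by apply: le_restr; rewrite memF hy hFy.
by have := flow_below pre hy; rewrite /f hFy.
Qed.

Lemma with_inflow_id (h : flowGraph M) : with_inflow h (fg_in h) = h.
Proof. by case: h. Qed.

Lemma flow_le_off (ha hb : flowGraph M) (F : pred nat) :
  fg_X ha = fg_X hb ->
  (forall z y, z \notin fg_X ha -> y \in fg_X ha -> fg_in ha z y = fg_in hb z y) ->
  (forall y w, y \in fg_X ha -> ~~ F y -> fg_E ha y w = fg_E hb y w) ->
  (forall y x, y \in fg_X ha -> F y -> x \in fg_X ha -> ~~ F x ->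
     tf (restrict ha F) (fg_in (restrict hb F)) y x =
     tf (restrict hb F) (fg_in (restrict hb F)) y x) ->
  forall x, x \in fg_X ha -> ~~ F x -> mle (flow ha x) (flow hb x).
Proof.
move=> hX hin hE htf.
set k := with_inflow (restrict ha F) (fg_in (restrict hb F)).
pose q z := if F z then flow k z else flow hb z.
have memk z : (z \in fg_X k) = (z \in fg_X ha) && F z by rewrite !inE.
have inflow_k x : x \in fg_X ha -> inflow_at k x = add (inflow_at ha x)
    (\big[add/z0]_(y <- enum_fset (fg_X ha) | ~~ F y) fg_E hb y x (flow hb y)).
  move=> hx; apply: (@inflow_restr k (fg_X ha) F x (fun z => fg_in ha z x)) => //.
  - by move=> z hz; rewrite /k /= -hX (negbTE hz) hin.
  - by move=> z hz _; rewrite /k /= -hX hz.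
  - exact: inflow_lub.
have Phi_q x : Phi ha q x = add (inflow_at ha x)
    (add (\big[add/z0]_(y <- enum_fset (fg_X ha) | ~~ F y) fg_E hb y x (flow hb y))
         (msum (enum_fset (fg_X k)) (fun y => fg_E ha y x (flow k y)))).
  rewrite (Phi_split _ F); congr (add _ (add _ _)).
    by apply: big_eq_in => y hy hnF; rewrite /q (negbTE hnF) hE.
  by apply: msum_eq_in => y; rewrite !inE /q => /andP [_ ->].
have transfer y x : y \in fg_X k -> x \in fg_X ha -> ~~ F x ->
    fg_E ha y x (flow k y) = fg_E hb y x (flow hb y).
  rewrite memk => /andP [hyX hFy] hx hnFx.
  have := htf y x hyX hFy hx hnFx.
  by rewrite /tf /outflow with_inflow_id /= => ->; rewrite restrict_flow // -hX.
have pre : prefixp ha q.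
  move=> x hx; rewrite Phi_q /q; case hFx: (F x).
    rewrite [X in mle _ X](@flow_solves k x) ?memk ?hx ?hFx // inflow_k // -fm_addA.
    exact: mle_refl.
  rewrite [X in mle _ X](@flow_solves hb x) -?hX // (split_sum (fg_X ha) F).
  rewrite -(@inflow_ext ha hb x hX) => [|y hy]; last exact: hin.
  rewrite (msum_eq_in (g := fun y => fg_E hb y x (flow hb y))).
    exact: mle_refl.
  by move=> y hy; apply: transfer; rewrite ?hFx.
by move=> x hx hnF; have := flow_below pre hx; rewrite /q (negbTE hnF).
Qed.

Lemma restrict_inflow_le (ha hb : flowGraph M) (F : pred nat) :
  fg_X ha = fg_X hb ->
  (forall z y, z \notin fg_X ha -> y \in fg_X ha -> fg_in ha z y = fg_in hb z y) ->
  (forall y w, y \in fg_X ha -> ~~ F y -> fg_E ha y w = fg_E hb y w) ->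
  (forall x, x \in fg_X ha -> ~~ F x -> mle (flow ha x) (flow hb x)) ->
  forall z y, z \notin fg_X (restrict ha F) -> y \in fg_X (restrict ha F) ->
    mle (fg_in (restrict ha F) z y) (fg_in (restrict hb F) z y).
Proof.
move=> hX hin hE hle z y hz hy; rewrite /= -hX; case: ifP => hzX.
  have hnFz : ~~ F z by move: hz; rewrite !inE hzX.
  rewrite -(hE z y hzX hnFz); apply: cont_mono; first exact: fg_Econt.
  exact: hle.
have hyX : y \in fg_X ha by move: hy; rewrite !inE => /andP [].
by rewrite hin ?hzX //; apply: mle_refl.
Qed.

Lemma edges_agree_off_Out (h1 h2 : flowGraph M) (F : pred nat) :
  (forall x, Out h1 h2 x -> F x) ->
  forall y w, y \in fg_X h1 -> ~~ F y -> fg_E h1 y w = fg_E h2 y w.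
Proof.
move=> hOut y w hy hnF; apply: NNPP => hne.
by have := hOut y (conj hy (ex_intro _ w hne)); rewrite (negbTE hnF).
Qed.

Lemma no_TF_transfer (h1 h2 : flowGraph M) (F : pred nat) inf :
  (forall x, ~ TF h1 h2 F x) ->
  (forall y z, y \notin fg_X (restrict h1 F) -> z \in fg_X (restrict h1 F) ->
     mle (inf y z) (fg_in (restrict h1 F) y z)) ->
  forall y x, F y -> ~~ F x -> tf (restrict h1 F) inf y x = tf (restrict h2 F) inf y x.
Proof.
move=> hTF hinf y x hFy hnFx; apply: NNPP => hne; apply: (hTF x); split => //.
by exists inf; split => //; exists y.
Qed.

End FlowTheory.

Theorem lemma6 (M : flowMonoid) (h1 h2 : flowGraph M) (F : pred nat) :
  fg_X h1 = fg_X h2 ->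
  (forall z y, z \notin fg_X h1 -> y \in fg_X h1 -> fg_in h1 z y = fg_in h2 z y) ->
  (forall x, Out h1 h2 x -> F x) ->
  (forall x, F x -> x \in fg_X h1) ->
  (forall x, ~ TF h1 h2 F x) ->
  forall z y, z \notin fg_X (restrict h1 F) -> y \in fg_X (restrict h1 F) ->
    fg_in (restrict h1 F) z y = fg_in (restrict h2 F) z y.
Proof.
move=> hX hin hOut _ hTF z y hz hy.
have hE := edges_agree_off_Out hOut.
have transfer := no_TF_transfer (h2 := h2) hTF.
have hX' : fg_X (restrict h2 F) = fg_X (restrict h1 F) by rewrite /= hX.
have hin' z' y' : z' \notin fg_X h2 -> y' \in fg_X h2 -> fg_in h2 z' y' = fg_in h1 z' y'.
  by rewrite -hX => *; rewrite hin.
have hE' y' w : y' \in fg_X h2 -> ~~ F y' -> fg_E h2 y' w = fg_E h1 y' w.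
  by rewrite -hX => *; rewrite hE.
(* h2.flow <= h1.flow off F: feed h1|_F its own inflow. *)
have le21 x : x \in fg_X h2 -> ~~ F x -> mle (flow h2 x) (flow h1 x).
  apply: (flow_le_off (F := F) (esym hX) hin' hE') => y' x' _ hFy' _ hnFx'.
  by symmetry; apply: transfer => // *; apply: mle_refl.
(* h1.flow <= h2.flow off F: by le21, the inflow of h2|_F is below that of h1|_F. *)
have le12 x : x \in fg_X h1 -> ~~ F x -> mle (flow h1 x) (flow h2 x).
  apply: (flow_le_off (F := F) hX hin hE) => y' x' _ hFy' _ hnFx'.
  apply: transfer => // a b; rewrite -hX' => ha hb.
  exact: (restrict_inflow_le (esym hX) hin' hE' le21).
apply: fm_antisym; first exact: (restrict_inflow_le hX hin hE le12).
by rewrite -hX' in hz hy; exact: (restrict_inflow_le (esym hX) hin' hE' le21).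
Qed.
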